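(* Let $G$ be a graph with a linear order $<$ on $V(G)$ satisfying the X-property, and let $s<t$ be vertices with $d^*:=\operatorname{dist}(s,t)<\infty$. Then, with $d=d^*$, at least one of the following holds: (i) $\beta_s(\sigma)=\beta_t(\tau)$ for some nonnegative integers $\sigma,\tau$ with $\sigma+\tau=d$; (ii) $G$ contains an edge between $\alpha_s(\sigma)$ and $\alpha_t(\tau)$ for some nonnegative integers $\sigma,\tau$ with $\sigma+\tau=d-1$; (iii) there are nonnegative integers $\sigma,\tau$ with $\sigma+\tau=d-3$ and vertices $v\in\{\alpha_s(\sigma),\beta_s(\sigma)\}$, $w\in\{\alpha_t(\tau),\beta_t(\tau)\}$ with $v<w$, $\operatorname{rhorizon}(v)\ge t$ and $\operatorname{lhorizon}(w)\le s$.
   Context: The X-property: for all vertices $p<q<r<s$, if $\{p,r\}\in E(G)$ and $\{q,s\}\in E(G)$ then $\{p,s\}\in E(G)$. $N[v]$ is the closed neighborhood; $\operatorname{lhorizon}(v):=\min N[v]$ and $\operatorname{rhorizon}(v):=\max N[v]$ w.r.t. $<$. For an integer $k\ge 0$: $\alpha_s(k)$ (resp. $\beta_s(k)$) is the leftmost (resp. rightmost) vertex reachable from $s$ by a path of length at most $k$ using only vertices $v\le t$; $\alpha_t(k)$ (resp. $\beta_t(k)$) is the rightmost (resp. leftmost) vertex reachable from $t$ by a path of length at most $k$ using only vertices $v\ge s$. *)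

From mathcomp Require Import all_boot all_order.
Set Implicit Arguments. Unset Strict Implicit. Unset Printing Implicit Defensive.
Import Order.TTheory.
Local Open Scope order_scope.

Section Defs.
Context {disp : Order.disp_t} {T : finOrderType disp}.

Definition simple_graph (e : rel T) : Prop :=
  (forall x y, e x y = e y x) /\ (forall x, ~~ e x x).

Definition X_property (e : rel T) : Prop :=
  forall p q r s : T, p < q -> q < r -> r < s -> e p r -> e q s -> e p s.

Definition reach_in (e : rel T) (P : pred T) (x : T) (k : nat) (v : T) : bool :=
  [exists n : 'I_k.+1, exists w : n.-tuple T,
     [&& path e x w, all P (x :: w) & last x w == v]].

Definition is_dist (e : rel T) (x y : T) (d : nat) : Prop :=
  (exists w : seq T, [/\ path e x w, size w = d & last x w = y]) /\
  (forall w : seq T, path e x w -> last x w = y -> d <= size w)%N.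

(* closed neighbourhood horizons *)
Definition lhorizon (e : rel T) (v : T) : T := \big[Order.min/v]_(u | e v u) u.
Definition rhorizon (e : rel T) (v : T) : T := \big[Order.max/v]_(u | e v u) u.

Definition alpha_s (e : rel T) (s t : T) (k : nat) : T :=
  \big[Order.min/s]_(v | reach_in e (fun u => u <= t) s k v) v.
Definition beta_s (e : rel T) (s t : T) (k : nat) : T :=
  \big[Order.max/s]_(v | reach_in e (fun u => u <= t) s k v) v.
Definition alpha_t (e : rel T) (s t : T) (k : nat) : T :=
  \big[Order.max/t]_(v | reach_in e (fun u => s <= u) t k v) v.
Definition beta_t (e : rel T) (s t : T) (k : nat) : T :=
  \big[Order.min/t]_(v | reach_in e (fun u => s <= u) t k v) v.

End Defs.

(* Fix a shortest path s = x_0, ..., x_d = t, let j be the first index with t < x_j and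
   i the last one with x_i < s.  If there is no j, the whole path lies in {v <= t} and
   beta_s(d) = t = beta_t(0); symmetrically if there is no i.  Otherwise i <> j and
   - if i + 1 = j, the path jumps over [s, t] by the edge x_i x_j; the X-property moves
     its ends to alpha_s(i) and then to alpha_t(d - i - 1), which gives (ii);
   - if i + 1 < j, then x_(i+1) is simultaneously beta_s(i + 1) and beta_t(d - i - 1);
   - if j < i, then in fact i = j + 1, and the vertices among alpha/beta_s(j - 1) and
     alpha/beta_t(d - j - 2) adjacent to x_j and x_(j+1) witness (iii).
   Everything rests on one consequence of the X-property: an edge leaving the open span
   of an edge p r ends at p, at r, or at a neighbour of one of them.  Along a shortest
   path this forbids edges between vertices close to s from spanning vertices of the
   path far from s. *)

From mathcomp Require Import all_boot all_order zify.
Import Order.TTheory.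
Local Open Scope order_scope.
Set Implicit Arguments. Unset Strict Implicit. Unset Printing Implicit Defensive.

(* [lia] becomes very slow in the presence of the boolean graph hypotheses, so they are
   discarded first. *)
Ltac lia_nat :=
  repeat match goal with H : is_true ?b |- _ =>
    lazymatch b with context [leq _ _] => fail | _ => clear H end end;
  lia.

Section Walks.
Context {disp : Order.disp_t} {T : finOrderType disp} (e : rel T) (P : pred T).

Lemma reach_inP x k v :
  reflect (exists w, [/\ (size w <= k)%N, path e x w, all P (x :: w) & last x w = v])
          (reach_in e P x k v).
Proof.
apply: (iffP existsP) => [[n /existsP [w /and3P [ew Pw /eqP <-]]] | [w [sw ew Pw <-]]].
  by exists w; rewrite size_tuple -ltnS ltn_ord.
exists (Ordinal (sw : (size w < k.+1)%N)); apply/existsP; exists (in_tuple w).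
by rewrite ew Pw eqxx.
Qed.

Lemma reach_in_pred x k v : reach_in e P x k v -> P v.
Proof. by case/reach_inP=> w [_ _ /allP Pw <-]; apply/Pw/mem_last. Qed.

Lemma reach_in0 x v : reach_in e P x 0 v -> v = x.
Proof. by case/reach_inP=> -[|? ?] []. Qed.

Lemma reach_in_refl x : P x -> reach_in e P x 0 x.
Proof. by move=> Px; apply/reach_inP; exists [::]; rewrite /= Px. Qed.

Lemma reach_in_le x k k' v : (k <= k')%N -> reach_in e P x k v -> reach_in e P x k' v.
Proof.
move=> le_kk' /reach_inP [w [sw ew Pw lw]]; apply/reach_inP.
by exists w; rewrite (leq_trans sw le_kk').
Qed.

Lemma reach_in_rcons x k u v :
  reach_in e P x k u -> e u v -> P v -> reach_in e P x k.+1 v.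
Proof.
case/reach_inP=> w [sw ew Pw <-] euv Pv; apply/reach_inP; exists (rcons w v).
by rewrite size_rcons rcons_path ew euv -rcons_cons all_rcons Pv Pw last_rcons.
Qed.

Lemma reach_inS x k v : reach_in e P x k.+1 v ->
  reach_in e P x k v \/ exists2 u, reach_in e P x k u & e u v.
Proof.
case/reach_inP=> w [sw ew Pw lw].
case: (ltnP (size w) k.+1) => [short | long].
  by left; apply/reach_inP; exists w.
right; case/lastP: w => [|w u] in sw ew Pw lw long *; first by [].
rewrite size_rcons in sw; rewrite rcons_path in ew; rewrite -rcons_cons all_rcons in Pw.
rewrite last_rcons in lw; case/andP: ew => ew euv; case/andP: Pw => _ Pw.
by exists (last x w); [apply/reach_inP; exists w | rewrite -lw].
Qed.

Lemma reach_in_cat x k y l z :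
  reach_in e P x k y -> reach_in e P y l z -> reach_in e P x (k + l) z.
Proof.
case/reach_inP=> w [sw ew Pw <-] /reach_inP [w' [sw' ew' /= /andP [_ Pw'] <-]].
apply/reach_inP; exists (w ++ w').
by rewrite size_cat leq_add // cat_path ew ew' -cat_cons all_cat Pw Pw' last_cat.
Qed.

Lemma reach_in_sym : symmetric e -> forall x k y, reach_in e P x k y -> reach_in e P y k x.
Proof.
move=> e_sym x; elim=> [|k IHk] y rxy.
  by move: (reach_in_pred rxy); rewrite (reach_in0 rxy); apply: reach_in_refl.
case: (reach_inS rxy) => [/IHk /(reach_in_le (leqnSn k)) // | [u rxu euy]].
have ryu : reach_in e P y 1 u.
  by apply: reach_in_rcons (reach_in_refl (reach_in_pred rxy)) _ (reach_in_pred rxu);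
     rewrite e_sym.
exact: reach_in_cat ryu (IHk u rxu).
Qed.

Definition between (a y b : T) := (a < y < b) || (b < y < a).

Lemma between_split x u v y : between x y v -> u != y -> ~~ between x y u -> between u y v.
Proof.
rewrite /between => /orP [] /andP [lt1 lt2] uy.
  rewrite lt1 (lt_gtF lt1) andbF orbF -leNgt => yu.
  by rewrite lt2 andbT [u < y]lt_neqAle uy yu.
rewrite (lt_gtF lt2) lt2 /= andbT -leNgt => yu.
by rewrite lt1 [y < u]lt_neqAle eq_sym uy yu orbT.
Qed.

Lemma reach_in_cross x k v y : reach_in e P x k v -> between x y v ->
  (exists2 i, (i < k)%N & reach_in e P x i y) \/
  exists i a b, [/\ (i < k)%N, reach_in e P x i a, reach_in e P x i.+1 b, e a b
                  & between a y b] /\ ((i.+1 < k)%N \/ b = v).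
Proof.
elim: k v => [|k IHk] v rv xyv.
  by move: xyv; rewrite (reach_in0 rv) /between orbb lt_asym.
case: (reach_inS rv) => [rv' | [u ru euv]].
  case: (IHk v rv' xyv) => [[i ik ry] | [i [a [b [[ik ra rb eab ayb] ib]]]]].
    by left; exists i => //; lia_nat.
  right; exists i, a, b; split; first by split=> //; lia_nat.
  by case: ib => [?|->]; [left; lia_nat | right].
case: (eqVneq u y) => [<- | uy]; first by left; exists k.
case: (boolP (between x y u)) => [xyu | nxyu].
  case: (IHk u ru xyu) => [[i ik ry] | [i [a [b [[ik ra rb eab ayb] _]]]]].
    by left; exists i => //; lia_nat.
  by right; exists i, a, b; split; [split=> //; lia_nat | left; lia_nat].
by right; exists k, u, v; split; [split=> //; exact: between_split xyv uy nxyu | right].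
Qed.

End Walks.

Lemma reach_in_predT {disp : Order.disp_t} {T : finOrderType disp} (e : rel T) P x k v :
  reach_in e P x k v -> reach_in e predT x k v.
Proof.
case/reach_inP=> w [sw ew _ lw]; apply/reach_inP.
by exists w; rewrite all_predT.
Qed.

Section XProperty.
Context {disp : Order.disp_t} {T : finOrderType disp} (e : rel T).
Hypotheses (e_sym : symmetric e) (eX : X_property e).

Definition exits_span (p r v : T) :=
  [|| v == p, v == r, (r < v) && e p v | (v < p) && e v r].

Lemma X_property_dual : X_property (T := T^d) e.
Proof.
move=> p q r s' pq qr rs epr eqs; rewrite e_sym.
by apply: (eX (p := s') (q := r) (r := q)) => //; rewrite e_sym.
Qed.

Lemma exits_span_out p r v : exits_span p r v -> ~~ (p < v < r).
Proof.
rewrite negb_and -!leNgt.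
by case/or4P=> [/eqP -> | /eqP -> | /andP [/ltW -> _] | /andP [/ltW -> _]]; rewrite ?lexx ?orbT.
Qed.

Lemma X_exits_span p r u v : e p r -> p < u < r -> e u v -> ~~ (p < v < r) ->
  exits_span p r v.
Proof.
move=> epr /andP [pu ur] euv; rewrite /exits_span negb_and -!leNgt.
case: (ltgtP v p) => [vp _ | pv | -> //]; first by rewrite (eX vp pu ur) ?orbT // e_sym.
case: (ltgtP v r) => // rv _.
by rewrite (eX pu ur rv).
Qed.

Lemma edge_exits_span p r u v : e p r -> e u v ->
  (p < u < r) != (p < v < r) -> exits_span p r u || exits_span p r v.
Proof.
move=> epr euv; case: (boolP (p < u < r)) => [ui vo | uo /negbNE vi].
  by rewrite (X_exits_span epr ui euv vo) orbT.
by rewrite (X_exits_span epr vi _ uo) // e_sym.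
Qed.

Lemma seq_exits_span (f : nat -> T) p r m n : e p r -> (m <= n)%N ->
  (forall l, (m <= l < n)%N -> e (f l) (f l.+1)) ->
  (p < f m < r) != (p < f n < r) -> exists2 q, (m <= q <= n)%N & exits_span p r (f q).
Proof.
move=> epr; elim: n => [|n IHn] le_mn ef.
  by rewrite leqn0 in le_mn; rewrite (eqP le_mn) eqxx.
case: (ltnP n m) => [lt_nm | le_mn'].
  have -> : m = n.+1 by lia_nat.
  by rewrite eqxx.
case: (boolP ((p < f m < r) != (p < f n < r))) => [neq _ | /negbNE /eqP -> neq].
  have [|q mqn exq] := IHn le_mn' _ neq; first by move=> l lmn; apply: ef; lia_nat.
  by exists q => //; lia_nat.
have efn : e (f n) (f n.+1) by apply: ef; lia_nat.
by case/orP: (edge_exits_span epr efn neq) => exq; [exists n | exists n.+1] => //; lia_nat.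
Qed.

Lemma reach_in_exits_span (P : pred T) p r x k v : e p r ->
  reach_in e P x k v -> (p < x < r) != (p < v < r) ->
  exists i z, [/\ (i <= k)%N, reach_in e P x i z & exits_span p r z].
Proof.
move=> epr; elim: k v => [|k IHk] v rv; first by rewrite (reach_in0 rv) eqxx.
have weaken i z : (i <= k)%N -> reach_in e P x i z -> exits_span p r z ->
  exists i z, [/\ (i <= k.+1)%N, reach_in e P x i z & exits_span p r z].
  by move=> ik rz exz; exists i, z; rewrite (leq_trans ik (leqnSn k)).
case: (reach_inS rv) => [rv' /(IHk _ rv') [i [z [ik rz exz]]] | [u ru euv]].
  exact: weaken ik rz exz.
case: (boolP ((p < x < r) != (p < u < r))) => [xu | /negbNE /eqP ->].
  by case: (IHk _ ru xu) => i [z [ik rz exz]] _; exact: weaken ik rz exz.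
by case/(edge_exits_span epr euv)/orP => [exu | exv]; [exact: weaken ru exu | exists k.+1, v].
Qed.

End XProperty.

Section BigExtremum.
Context {disp : Order.disp_t} {T : finOrderType disp}.

Lemma bigmin_cond_mem (P : pred T) x0 : P x0 -> P (\big[Order.min/x0]_(u | P u) u).
Proof. by move=> Px0; apply: (big_ind P) => // a b Pa Pb; case: leP. Qed.

Lemma bigmax_cond_mem (P : pred T) x0 : P x0 -> P (\big[Order.max/x0]_(u | P u) u).
Proof. by move=> Px0; apply: (big_ind P) => // a b Pa Pb; case: leP. Qed.

End BigExtremum.

Section Horizons.
Context {disp : Order.disp_t} {T : finOrderType disp} (e : rel T).
Hypotheses (e_sym : symmetric e) (eX : X_property e).
Variables s t : T.
Hypothesis le_st : s <= t.

Local Notation S_ k v := (reach_in e (fun u => u <= t) s k v).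

Lemma reach_s0 : S_ 0 s.
Proof. exact: reach_in_refl. Qed.

Lemma alpha_s_reach k : S_ k (alpha_s e s t k).
Proof. by apply: bigmin_cond_mem; apply: reach_in_le reach_s0. Qed.

Lemma alpha_s_le k v : S_ k v -> alpha_s e s t k <= v.
Proof. exact: bigmin_le_cond. Qed.

Lemma beta_s_reach k : S_ k (beta_s e s t k).
Proof. by apply: bigmax_cond_mem; apply: reach_in_le reach_s0. Qed.

Lemma le_beta_s k v : S_ k v -> v <= beta_s e s t k.
Proof. exact: le_bigmax_cond. Qed.

Section FirstReach.
Variables (sigma : nat) (u r : T).
Hypotheses (lt_tr : t < r) (eur : e u r).
Hypothesis r_far : forall i v, S_ i v -> e v r -> (sigma <= i)%N.

Lemma reach_beyond_adj z : S_ sigma z -> between s u z -> e z r && (z < u).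
Proof.
move=> rz suz; case: (reach_in_cross rz suz) => [[i lt_is ru] | ].
  by have := r_far ru eur; lia_nat.
move=> [i [a [b [[lt_is ra rb eab]]]]] /orP [] /andP [au ub] ib.
  have ear : e a r by apply: (eX au ub (le_lt_trans (reach_in_pred rb) lt_tr) eab).
  by have := r_far ra ear; lia_nat.
have ebr : e b r by apply: (eX au ub (le_lt_trans (reach_in_pred ra) lt_tr)); rewrite // e_sym.
have := r_far rb ebr; case: ib => [|<- _]; first by lia_nat.
by rewrite ebr au.
Qed.

Hypothesis ru : S_ sigma u.

Lemma alpha_s_adj : u <= s -> e (alpha_s e s t sigma) r.
Proof.
move=> le_us; have := alpha_s_le ru; rewrite le_eqVlt => /orP [/eqP -> // | lt_au].
case: (eqVneq u s) => [eq_us | neq_us].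
  have sigma0 : sigma = 0 by have := r_far reach_s0; rewrite -eq_us => /(_ eur); lia_nat.
  by move: lt_au; rewrite sigma0 (reach_in0 (alpha_s_reach 0)) eq_us ltxx.
have suz : between s u (alpha_s e s t sigma).
  by rewrite /between lt_au [u < s]lt_neqAle neq_us le_us orbT.
by case/andP: (reach_beyond_adj (alpha_s_reach sigma) suz).
Qed.

Lemma beta_s_eq : s <= u -> beta_s e s t sigma = u.
Proof.
move=> le_su; apply/eqP; rewrite eq_le le_beta_s // andbT leNgt; apply/negP => lt_ub.
case: (eqVneq s u) => [eq_su | neq_su].
  have sigma0 : sigma = 0 by have := r_far reach_s0; rewrite eq_su => /(_ eur); lia_nat.
  by move: lt_ub; rewrite sigma0 (reach_in0 (beta_s_reach 0)) eq_su ltxx.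
have suz : between s u (beta_s e s t sigma).
  by rewrite /between lt_ub [s < u]lt_neqAle neq_su le_su.
by case/andP: (reach_beyond_adj (beta_s_reach sigma) suz) => _ /(lt_trans lt_ub); rewrite ltxx.
Qed.

Lemma alpha_beta_s_adj : exists v,
  [/\ v \in [:: alpha_s e s t sigma; beta_s e s t sigma], S_ sigma v & e v r].
Proof.
case: (leP u s) => [le_us | /ltW le_su].
  by exists (alpha_s e s t sigma); rewrite inE eqxx alpha_s_reach alpha_s_adj.
by exists (beta_s e s t sigma); rewrite !inE eqxx orbT beta_s_reach beta_s_eq.
Qed.

End FirstReach.

End Horizons.

(* The region {u | s <= u} explored from t is the region {u | u <= t} explored from s in
   the dual order, so the statements for alpha_t, beta_t are those for alpha_s, beta_s. *)
Section Duality.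
Context {disp : Order.disp_t} {T : finOrderType disp} (e : rel T).
Hypotheses (e_sym : symmetric e) (eX : X_property e).
Variables s t : T.
Hypothesis le_st : s <= t.

Local Notation T_ k v := (reach_in e (fun u => s <= u) t k v).

Lemma alpha_s_dual k : alpha_s (T := T^d) e t s k = alpha_t e s t k.
Proof.
by apply: (big_ind2 eq) => // a _ b _ <- <-; rewrite /Order.min ltEdual; case: ltgtP.
Qed.

Lemma beta_s_dual k : beta_s (T := T^d) e t s k = beta_t e s t k.
Proof.
by apply: (big_ind2 eq) => // a _ b _ <- <-; rewrite /Order.max ltEdual; case: ltgtP.
Qed.

Lemma alpha_t_reach k : T_ k (alpha_t e s t k).
Proof. by rewrite -alpha_s_dual; apply: (alpha_s_reach (T := T^d)). Qed.

Lemma beta_t_reach k : T_ k (beta_t e s t k).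
Proof. by rewrite -beta_s_dual; apply: (beta_s_reach (T := T^d)). Qed.

Lemma beta_t_le k v : T_ k v -> beta_t e s t k <= v.
Proof. by rewrite -beta_s_dual; apply: (le_beta_s (T := T^d)). Qed.

Section FirstReach.
Variables (tau : nat) (w p : T).
Hypotheses (lt_ps : p < s) (ewp : e w p) (rw : T_ tau w).
Hypothesis p_far : forall i v, T_ i v -> e v p -> (tau <= i)%N.

Lemma alpha_t_adj : t <= w -> e (alpha_t e s t tau) p.
Proof.
rewrite -alpha_s_dual.
exact: (alpha_s_adj (T := T^d) e_sym (X_property_dual e_sym eX) le_st lt_ps ewp p_far rw).
Qed.

Lemma beta_t_eq : w <= t -> beta_t e s t tau = w.
Proof.
rewrite -beta_s_dual.
exact: (beta_s_eq (T := T^d) e_sym (X_property_dual e_sym eX) le_st lt_ps ewp p_far rw).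
Qed.

Lemma alpha_beta_t_adj : exists v,
  [/\ v \in [:: alpha_t e s t tau; beta_t e s t tau], T_ tau v & e v p].
Proof.
case: (leP t w) => [le_tw | /ltW le_wt].
  by exists (alpha_t e s t tau); rewrite inE eqxx alpha_t_reach alpha_t_adj.
by exists (beta_t e s t tau); rewrite !inE eqxx orbT beta_t_reach beta_t_eq.
Qed.

End FirstReach.

End Duality.

Definition beta_meet {disp : Order.disp_t} {T : finOrderType disp} (e : rel T) (s t : T) d :=
  exists sigma tau : nat, (sigma + tau = d)%N /\ beta_s e s t sigma = beta_t e s t tau.

Definition alpha_edge {disp : Order.disp_t} {T : finOrderType disp} (e : rel T) (s t : T) d :=
  exists sigma tau : nat, (sigma + tau + 1 = d)%N /\
    e (alpha_s e s t sigma) (alpha_t e s t tau).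

Definition horizon_cross {disp : Order.disp_t} {T : finOrderType disp} (e : rel T) (s t : T) d :=
  exists sigma tau : nat, (sigma + tau + 3 = d)%N /\
    exists v w : T,
      [/\ v \in [:: alpha_s e s t sigma; beta_s e s t sigma],
          w \in [:: alpha_t e s t tau; beta_t e s t tau],
          v < w, t <= rhorizon e v & lhorizon e w <= s].

Section Geodesic.
Context {disp : Order.disp_t} {T : finOrderType disp} (e : rel T).
Hypotheses (e_sym : symmetric e) (eX : X_property e).
Variables (s t : T) (d : nat) (w0 : seq T).
Hypotheses (lt_st : s < t) (w0_path : path e s w0) (size_w0 : size w0 = d)
  (last_w0 : last s w0 = t).
Hypothesis w0_min : forall w, path e s w -> last s w = t -> (d <= size w)%N.

Local Notation S_ k v := (reach_in e (fun u => u <= t) s k v).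
Local Notation T_ k v := (reach_in e (fun u => s <= u) t k v).

Let x l := nth s (s :: w0) l.

Lemma x_d : x d = t.
Proof. by rewrite /x -size_w0 -last_nth. Qed.

Lemma x_edge l : (l < d)%N -> e (x l) (x l.+1).
Proof. by move=> ld; move/(pathP s): w0_path; apply; rewrite size_w0. Qed.

Lemma reach_x_segment (P : pred T) m n : (m <= n <= d)%N ->
  (forall l, (m <= l <= n)%N -> P (x l)) -> reach_in e P (x m) (n - m) (x n).
Proof.
elim: n => [|n IHn] mnd Px.
  have -> : m = 0 by lia_nat.
  by apply/reach_in_refl/Px.
case: (leqP m n) => [le_mn | lt_nm]; last first.
  have -> : m = n.+1 by lia_nat.
  by rewrite subnn; apply/reach_in_refl/Px; lia_nat.
rewrite subSn //; apply: reach_in_rcons (IHn _ _) (x_edge _) (Px _ _); try lia_nat.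
by move=> l lmn; apply: Px; lia_nat.
Qed.

Lemma reach_x l : (l <= d)%N -> reach_in e predT s l (x l).
Proof. by move=> ld; have := @reach_x_segment predT 0 l; rewrite subn0; apply=> //; lia_nat. Qed.

Lemma reach_x_t l : (l <= d)%N -> reach_in e predT (x l) (d - l) t.
Proof. by move=> ld; rewrite -x_d; apply: reach_x_segment => [|//]; lia_nat. Qed.

Lemma reach_s_x l : (l <= d)%N -> (forall l', (l' <= l)%N -> x l' <= t) -> S_ l (x l).
Proof.
move=> ld le_t; have := @reach_x_segment (fun u => u <= t) 0 l; rewrite subn0.
by apply=> [|l' ?]; [lia_nat | apply: le_t; lia_nat].
Qed.

Lemma reach_t_x l : (l <= d)%N -> (forall l', (l <= l' <= d)%N -> s <= x l') ->
  T_ (d - l) (x l).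
Proof.
move=> ld ge_s; rewrite -x_d; apply/(reach_in_sym e_sym)/reach_x_segment => [|l' ?].
  by lia_nat.
by apply: ge_s; lia_nat.
Qed.

Lemma reach_dist (P Q : pred T) a b v :
  reach_in e P s a v -> reach_in e Q t b v -> (d <= a + b)%N.
Proof.
move=> /reach_in_predT rv /reach_in_predT /(reach_in_sym e_sym) rv'.
by case/reach_inP: (reach_in_cat rv rv') => w [sw ew _ lw]; apply: leq_trans (w0_min ew lw) sw.
Qed.

Lemma reach_dist_adj (P Q : pred T) a b v w :
  reach_in e P s a v -> reach_in e Q t b w -> e v w -> (d <= (a + b).+1)%N.
Proof.
move=> /reach_in_predT rv rw evw; rewrite -addSn.
exact: reach_dist (reach_in_rcons rv evw isT) rw.
Qed.

Lemma le_reach_x (P : pred T) k l : (l <= d)%N -> reach_in e P s k (x l) -> (l <= k)%N.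
Proof. by move=> ld rx; have := reach_dist rx (reach_in_sym e_sym (reach_x_t ld)); lia_nat. Qed.

Lemma le_reach_adj_x (P : pred T) k l v : (l <= d)%N ->
  reach_in e P s k v -> e v (x l) -> (l <= k.+1)%N.
Proof.
move=> ld rv ev; have := reach_dist_adj rv (reach_in_sym e_sym (reach_x_t ld)) ev.
by lia_nat.
Qed.

Lemma le_reach_t_x (Q : pred T) k l : (l <= d)%N -> reach_in e Q t k (x l) -> (d - l <= k)%N.
Proof. by move=> ld rx; have := reach_dist (reach_x ld) rx; lia_nat. Qed.

Lemma le_reach_t_adj_x (Q : pred T) k l v : (l <= d)%N ->
  reach_in e Q t k v -> e v (x l) -> (d - l <= k.+1)%N.
Proof.
move=> ld rv ev; rewrite e_sym in ev.
by have := reach_dist_adj (reach_x ld) rv ev; lia_nat.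
Qed.

Lemma x_eq_s l : (l <= d)%N -> x l = s -> l = 0.
Proof.
move=> ld xs; have r0 : reach_in e predT s 0 (x l) by rewrite xs; apply: reach_in_refl.
by have := le_reach_x ld r0; lia_nat.
Qed.

Lemma x_eq_t l : (l <= d)%N -> x l = t -> l = d.
Proof.
move=> ld xt; have r0 : reach_in e predT t 0 (x l) by rewrite xt; apply: reach_in_refl.
by have := le_reach_t_x ld r0; lia_nat.
Qed.

Lemma exits_span_dist (P Q : pred T) K b lo hi z :
  reach_in e P s K lo -> reach_in e P s K hi -> reach_in e Q t b z ->
  exits_span e lo hi z -> (d <= (K + b).+1)%N.
Proof.
move=> rlo rhi rz; case/or4P=> [/eqP zlo | /eqP zhi | /andP [_ ez] | /andP [_ ez]].
- by rewrite zlo in rz; have := reach_dist rlo rz; lia_nat.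
- by rewrite zhi in rz; have := reach_dist rhi rz; lia_nat.
- exact: reach_dist_adj rlo rz ez.
- by rewrite e_sym in ez; apply: reach_dist_adj rhi rz ez.
Qed.

Lemma x_escape_le (P : pred T) K lo hi m n : e lo hi ->
  reach_in e P s K lo -> reach_in e P s K hi -> (m <= n <= d)%N ->
  (lo < x m < hi) != (lo < x n < hi) -> exists2 q, (m <= q <= K.+1)%N & ~~ (lo < x q < hi).
Proof.
move=> elh rlo rhi mnd sep.
have [|l lmn|q mqn exq] := seq_exits_span e_sym eX elh _ _ sep.
- by lia_nat.
- by apply: x_edge; lia_nat.
exists q; last exact: exits_span_out exq.
have qd : (q <= d)%N by lia_nat.
by have := exits_span_dist rlo rhi (reach_in_sym e_sym (reach_x_t qd)) exq; lia_nat.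
Qed.

(* Otherwise an edge of the walk to v spans w, and the walk from t to w enters its span
   through a neighbour of one of its ends, which is too close to s. *)
Lemma reach_s_lt_reach_t a b v w : S_ a v -> T_ b w -> (a + b + 2 <= d)%N -> v < w.
Proof.
move=> rv rw abd; rewrite ltNge; apply/negP => wv.
have s_lt_w : s < w.
  rewrite lt_neqAle (reach_in_pred rw) andbT; apply/eqP => sw; rewrite -sw in rw.
  have r0 : reach_in e predT s 0 s by apply: reach_in_refl.
  by have := reach_dist r0 rw; lia_nat.
have w_lt_v : w < v.
  rewrite lt_neqAle wv andbT; apply/eqP => wv'; rewrite wv' in rw.
  by have := reach_dist rv rw; lia_nat.
have swv : between s w v by rewrite /between s_lt_w w_lt_v.
have span_w_out p r : e p r -> S_ a p -> S_ a r -> p < w < r -> False.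
  move=> epr rp rr pwr.
  have t_out : ~~ (p < t < r) by rewrite negb_and -!leNgt (reach_in_pred rr) orbT.
  have [|i [z [ib rz exz]]] := reach_in_exits_span e_sym eX epr rw.
    by rewrite pwr (negbTE t_out).
  by have := exits_span_dist rp rr rz exz; lia_nat.
case: (reach_in_cross rv swv) => [[i ia rw'] | [i [p [r [[ia rp rr epr]]]]]].
  by have := reach_dist rw' rw; lia_nat.
have {}rp : S_ a p by apply: reach_in_le rp; lia_nat.
have {}rr : S_ a r by apply: reach_in_le rr; lia_nat.
case/orP => pwr _; first exact: span_w_out epr rp rr pwr.
by apply: span_w_out rr rp pwr; rewrite e_sym.
Qed.

Lemma spanned_x_le K p r m n : e p r -> S_ K p -> S_ K r -> between p (x m) r ->
  (m <= n <= d)%N -> t <= x n -> (m <= K)%N.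
Proof.
move=> epr rp rr pmr mnd txn.
wlog xm_in : p r epr rp rr {pmr} / p < x m < r.
  move=> oriented; case/orP: pmr => xm_in; first exact: oriented epr rp rr xm_in.
  by apply: oriented rr rp xm_in; rewrite e_sym.
have xn_out : ~~ (p < x n < r).
  by rewrite negb_and -!leNgt (le_trans (reach_in_pred rr) txn) orbT.
have [|q mqK xq_out] := x_escape_le epr rp rr mnd; first by rewrite xm_in xn_out.
have : q != m by apply: contraNneq xq_out => ->.
by lia_nat.
Qed.

(* After x_k the path must leave the span of lo hi; distance counting only allows a step to
   below lo next to hi, and then the walk to lo, shorter than k, jumps over x_(k+1). *)
Lemma x_not_spanned k j lo hi ilo ihi : (k < j <= d)%N -> t < x j ->
  (forall l, (k < l <= d)%N -> s <= x l) ->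
  e lo hi -> S_ ilo lo -> S_ ihi hi -> lo < x k < hi -> (ilo < k)%N -> (ihi <= k)%N -> False.
Proof.
move=> kjd txj ge_s elh rlo rhi xk_in ilo_k ihi_k.
have rlo' : S_ k lo by apply: reach_in_le rlo; lia_nat.
have rhi' : S_ k hi by apply: reach_in_le rhi; lia_nat.
have kd : (k < d)%N by lia_nat.
case: (boolP (lo < x k.+1 < hi)) => [xk1_in | xk1_out].
  have xk1_span : between lo (x k.+1) hi by rewrite /between xk1_in.
  have k1jd : (k.+1 <= j <= d)%N by lia_nat.
  by have := spanned_x_le elh rlo' rhi' xk1_span k1jd (ltW txj); lia_nat.
case/or4P: (X_exits_span e_sym eX elh xk_in (x_edge kd) xk1_out).
- by move/eqP=> xlo; rewrite -xlo in rlo; have := le_reach_x kd rlo; lia_nat.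
- by move/eqP=> xhi; rewrite -xhi in rhi; have := le_reach_x kd rhi; lia_nat.
- by case/andP=> _ ex; have := le_reach_adj_x kd rlo ex; lia_nat.
case/andP=> xk1_lo _.
have s_xk1 : s < x k.+1.
  rewrite lt_neqAle ge_s ?andbT; last by lia_nat.
  by apply/eqP => /esym /(x_eq_s kd).
have k1jd : (k.+1 <= j <= d)%N.
  have : k.+1 != j.
    by apply: contraTneq xk1_lo => ->; rewrite -leNgt (le_trans (reach_in_pred rlo)) ?ltW.
  by lia_nat.
have sxlo : between s (x k.+1) lo by rewrite /between s_xk1 xk1_lo.
case: (reach_in_cross rlo sxlo) => [[i ii rx] | [i [a [b [[ii ra rb eab axb] _]]]]].
  by have := le_reach_x kd rx; lia_nat.
have ra' : S_ k.-1 a by apply: reach_in_le ra; lia_nat.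
have rb' : S_ k.-1 b by apply: reach_in_le rb; lia_nat.
by have := spanned_x_le eab ra' rb' axb k1jd (ltW txj); lia_nat.
Qed.

Lemma beta_s_x k j : (0 < k)%N -> (k < j <= d)%N -> t < x j ->
  (forall l, (l < j)%N -> x l <= t) -> (forall l, (k <= l <= d)%N -> s <= x l) ->
  beta_s e s t k = x k.
Proof.
move=> k0 kjd txj le_t ge_s; have kd : (k <= d)%N by lia_nat.
have rxk : S_ k (x k) by apply: reach_s_x => // l lk; apply: le_t; lia_nat.
apply/eqP; rewrite eq_le le_beta_s // andbT leNgt; apply/negP => xk_lt.
have s_xk : s < x k.
  rewrite lt_neqAle ge_s ?andbT; last by lia_nat.
  by apply/eqP => /esym /(x_eq_s kd) k_0; rewrite k_0 in k0.
have sxb : between s (x k) (beta_s e s t k) by rewrite /between s_xk xk_lt.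
case: (reach_in_cross (beta_s_reach e (ltW lt_st) k) sxb).
  by case=> i ik rx; have := le_reach_x kd rx; lia_nat.
move=> [i [a [b [[ik ra rb eab axb] ib]]]].
have ge_s' l : (k < l <= d)%N -> s <= x l by move=> ?; apply: ge_s; lia_nat.
case/orP: axb => xk_in; first exact: (x_not_spanned kjd txj ge_s' eab ra rb xk_in ik ik).
have i1k : (i.+1 < k)%N.
  case: ib => // b_beta; rewrite b_beta in xk_in.
  by move: xk_lt; rewrite ltNge (ltW (andP xk_in).1).
by apply: x_not_spanned kjd txj ge_s' _ rb ra xk_in i1k (ltnW ik); rewrite e_sym.
Qed.

(* x_i lies in the span of the edge x_(j-1) x_j, hence is spanned by an edge of the path
   before x_(j-1). *)
Lemma above_then_below j i : (0 < j < i)%N -> (i <= d)%N -> t < x j ->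
  (forall l, (l < j)%N -> x l <= t) -> x i < s -> i = j.+1.
Proof.
case: j => [//|j] /andP [_ ji] id txj le_t xis.
apply/eqP; rewrite eqn_leq ji andbT leqNgt; apply/negP => ji2.
have jd : (j < d)%N by lia_nat.
have xj_t : x j <= t := le_t j (ltnSn j).
have rxj : reach_in e predT s j.+1 (x j) by apply/(reach_in_le (leqnSn j))/reach_x/ltnW.
have xj_xi : x j < x i.
  rewrite ltNge; apply/negP => xi_xj.
  have xj_ne_t : x j != t by apply/eqP => /(x_eq_t (ltnW jd)) j_d; rewrite j_d ltnn in jd.
  have idd : (i <= d <= d)%N by rewrite id leqnn.
  have [|q iq _] := x_escape_le (x_edge jd) rxj (reach_x jd) idd _.
    have xj_lt_t : x j < t by rewrite lt_neqAle xj_ne_t xj_t.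
    by rewrite x_d [x j < x i]ltNge xi_xj xj_lt_t txj.
  by lia_nat.
have sxj : between s (x i) (x j) by rewrite /between xj_xi xis orbT.
have rsj : S_ j (x j) by apply: reach_s_x => [|l lj]; [exact: ltnW | apply: le_t; lia_nat].
case: (reach_in_cross rsj sxj) => [[l lj rx] | [l [a [b [[lj ra rb eab axb] _]]]]].
  by have := le_reach_x id rx; lia_nat.
have ra' : S_ j a by apply: reach_in_le ra; lia_nat.
have rb' : S_ j b by apply: reach_in_le rb; lia_nat.
have idd : (i <= d <= d)%N by rewrite id leqnn.
have txd : t <= x d by rewrite x_d.
by have := spanned_x_le eab ra' rb' axb idd txd; lia_nat.
Qed.

Lemma beta_meet_no_above : (forall l, (l <= d)%N -> x l <= t) -> beta_meet e s t d.
Proof.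
move=> le_t; exists d, 0; split; first exact: addn0.
have rt : S_ d (x d) by apply: reach_s_x => // l ld; apply: le_t.
rewrite x_d in rt; rewrite (reach_in0 (beta_t_reach e (ltW lt_st) 0)).
by apply/le_anti; rewrite (reach_in_pred (beta_s_reach e (ltW lt_st) d)) le_beta_s.
Qed.

Lemma beta_meet_no_below : (forall l, (l <= d)%N -> s <= x l) -> beta_meet e s t d.
Proof.
move=> ge_s; exists 0, d; split=> //.
have rs : T_ (d - 0) (x 0) by apply: reach_t_x => // l /andP [_ ld]; apply: ge_s.
rewrite subn0 /x /= in rs; rewrite (reach_in0 (beta_s_reach e (ltW lt_st) 0)).
by apply/le_anti; rewrite (reach_in_pred (beta_t_reach e (ltW lt_st) d)) beta_t_le.
Qed.

Lemma beta_meet_apart i j : (i.+1 < j <= d)%N -> x i < s -> t < x j ->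
  (forall l, (l < j)%N -> x l <= t) -> (forall l, (i < l <= d)%N -> s <= x l) ->
  beta_meet e s t d.
Proof.
move=> ijd xis txj le_t ge_s; exists i.+1, (d - i.+1); split; first by lia_nat.
have -> : beta_s e s t i.+1 = x i.+1.
  by apply: (beta_s_x (j := j)) => // l ?; apply: ge_s.
have id : (i < d)%N by lia_nat.
have p_far i' v : T_ i' v -> e v (x i) -> (d - i.+1 <= i')%N.
  by move=> rv ev; have := le_reach_t_adj_x (ltnW id) rv ev; lia_nat.
apply/esym; apply: (beta_t_eq e_sym eX (ltW lt_st) xis _ (reach_t_x id ge_s) p_far).
  by rewrite e_sym x_edge.
by apply: le_t; lia_nat.
Qed.

Lemma alpha_edge_adjacent i : (i < d)%N -> x i < s -> t < x i.+1 ->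
  (forall l, (l <= i)%N -> x l <= t) -> (forall l, (i < l <= d)%N -> s <= x l) ->
  alpha_edge e s t d.
Proof.
move=> id xis txi le_t ge_s; exists i, (d - i.+1); split; first by lia_nat.
have rxi : S_ i (x i) by apply: reach_s_x; first exact: ltnW.
have r_far i' v : S_ i' v -> e v (x i.+1) -> (i <= i')%N.
  by move=> rv ev; have := le_reach_adj_x id rv ev; lia_nat.
have ea := alpha_s_adj e_sym eX (ltW lt_st) txi (x_edge id) r_far rxi (ltW xis).
have a_s : alpha_s e s t i < s := le_lt_trans (alpha_s_le rxi) xis.
have p_far i' v : T_ i' v -> e v (alpha_s e s t i) -> (d - i.+1 <= i')%N.
  move=> rv ev; rewrite e_sym in ev.
  by have := reach_dist_adj (alpha_s_reach e (ltW lt_st) i) rv ev; lia_nat.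
rewrite e_sym; apply: (alpha_t_adj e_sym eX (ltW lt_st) a_s _ (reach_t_x id ge_s) p_far).
  by rewrite e_sym.
exact: ltW.
Qed.

Lemma horizon_cross_crossed j : (j.+3 <= d)%N -> t < x j.+1 -> x j.+2 < s ->
  (forall l, (l <= j)%N -> x l <= t) -> (forall l, (j.+2 < l <= d)%N -> s <= x l) ->
  horizon_cross e s t d.
Proof.
move=> jd txj1 xj2s le_t ge_s; exists j, (d - j.+3); split; first by lia_nat.
have jd1 : (j < d)%N by lia_nat.
have jd2 : (j.+2 <= d)%N by lia_nat.
have r_far i v : S_ i v -> e v (x j.+1) -> (j <= i)%N.
  by move=> rv ev; have := le_reach_adj_x jd1 rv ev; lia_nat.
have rxj : S_ j (x j) by apply: reach_s_x => //; apply: ltnW.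
have [v [vin rv ev]] := alpha_beta_s_adj e_sym eX (ltW lt_st) txj1 (x_edge jd1) r_far rxj.
have p_far i w : T_ i w -> e w (x j.+2) -> (d - j.+3 <= i)%N.
  by move=> rw ew; have := le_reach_t_adj_x jd2 rw ew; lia_nat.
have exj : e (x j.+3) (x j.+2) by rewrite e_sym x_edge.
have [w [win rw ew]] := alpha_beta_t_adj e_sym eX (ltW lt_st) xj2s exj (reach_t_x jd ge_s) p_far.
exists v, w; split=> //.
- by apply: reach_s_lt_reach_t rv rw _; lia_nat.
- exact: le_trans (ltW txj1) (le_bigmax_cond _ _ ev).
- exact: le_trans (bigmin_le_cond _ _ ew) (ltW xj2s).
Qed.

Lemma geodesic_outcomes : beta_meet e s t d \/ alpha_edge e s t d \/ horizon_cross e s t d.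
Proof.
have [above | no_above] := boolP [exists l : 'I_d.+1, t < x l]; last first.
  left; apply: beta_meet_no_above => l ld; rewrite leNgt; apply: contra no_above => txl.
  by apply/existsP; exists (Ordinal (ld : (l < d.+1)%N)).
have [below | no_below] := boolP [exists l : 'I_d.+1, x l < s]; last first.
  left; apply: beta_meet_no_below => l ld; rewrite leNgt; apply: contra no_below => xls.
  by apply/existsP; exists (Ordinal (ld : (l < d.+1)%N)).
have ex_above : exists l, (l <= d)%N && (t < x l).
  by case/existsP: above => l txl; exists l; rewrite txl -ltnS ltn_ord.
have ex_below : exists l, (l <= d)%N && (x l < s).
  by case/existsP: below => l xls; exists l; rewrite xls -ltnS ltn_ord.
have [j /andP [jd txj] j_min] := ex_minnP ex_above.
have below_le l : (l <= d)%N && (x l < s) -> (l <= d)%N by case/andP.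
have [i /andP [id xis] i_max] := ex_maxnP ex_below below_le.
have le_t l : (l < j)%N -> x l <= t.
  by move=> lj; rewrite leNgt; apply/negP => txl; have := j_min l; rewrite txl andbT; lia_nat.
have ge_s l : (i < l <= d)%N -> s <= x l.
  move=> /andP [il ld]; rewrite leNgt; apply/negP => xls.
  by have := i_max l; rewrite xls ld; lia_nat.
have j0 : (0 < j)%N by case: j {j_min le_t} txj jd => // /(lt_trans lt_st); rewrite ltxx.
have i_d : (i < d)%N.
  by rewrite ltn_neqAle id andbT; apply: contraTneq xis => ->; rewrite x_d -leNgt ltW.
case: (ltngtP i j) => [ij | ji | ij].
- case: (eqVneq i.+1 j) => [ij1 | ij1].
    right; left; rewrite -ij1 in txj; apply: (alpha_edge_adjacent (i := i)) => // l li.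
    by apply: le_t; lia_nat.
  have ijd : (i.+1 < j <= d)%N by rewrite jd andbT ltn_neqAle ij1.
  by left; apply: (beta_meet_apart ijd).
- have j0i : (0 < j < i)%N by rewrite j0.
  have := above_then_below j0i id txj le_t xis.
  case: j {j_min j0i ji} jd j0 txj le_t => [//|j] _ _ txj le_t i_j; subst i.
  by right; right; apply: (horizon_cross_crossed (j := j)).
- by move: xis; rewrite ij ltNge (ltW (lt_trans lt_st txj)).
Qed.

End Geodesic.

Theorem lemma13 (disp : Order.disp_t) (T : finOrderType disp) (e : rel T)
  (s t : T) (d : nat) :
  simple_graph e -> X_property e -> s < t -> is_dist e s t d ->
  (exists sigma tau : nat, (sigma + tau = d)%N /\
     beta_s e s t sigma = beta_t e s t tau) \/
  (exists sigma tau : nat, (sigma + tau + 1 = d)%N /\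
     e (alpha_s e s t sigma) (alpha_t e s t tau)) \/
  (exists sigma tau : nat, (sigma + tau + 3 = d)%N /\
     exists v w : T,
       [/\ v \in [:: alpha_s e s t sigma; beta_s e s t sigma],
           w \in [:: alpha_t e s t tau; beta_t e s t tau],
           v < w, t <= rhorizon e v & lhorizon e w <= s]).
Proof.
move=> [e_sym _] eX lt_st [[w [w_path w_size w_last]] w_min].
exact: (geodesic_outcomes e_sym eX lt_st w_path w_size w_last w_min).
Qed.
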